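(* Consider the strategic usage dynamics described in the context, satisfying assumptions (A1)–(A4), with memory parameter $p\ge0$. For every time $t\ge 0$ and every user–service pair $(i,j)$ with $M^t_{ij}>0$, we have $\ell(h^{t+1}_j,x_i,y_i)=0$. Consequently, when $p>0$, if $A^t_{ij}>0$ for some time $t$, then $\ell(h^\tau_j,x_i,y_i)=0$ for all times $\tau>t$.
   Context: Setting. There are $n\ge 1$ users and $m\ge 1$ services. User $i\in\{1,\dots,n\}$ has fixed features $x_i\in\mathcal X$ and a fixed label $y_i\in\{+1,-1\}$. $\mathcal H$ is a set of classifiers $h:\mathcal X\to\{+1,-1\}$. There is a utility $u:\mathcal X\times\mathcal H\to\mathbb R$ (written $u(x,h)$) and a loss $\ell:\mathcal H\times\mathcal X\times\{+1,-1\}\to\mathbb R$ satisfying: (A1) for any $h_1,h_2\in\mathcal H$ and $x\in\mathcal X$ with $h_1(x)=-1$ and $h_2(x)=+1$, we have $u(x,h_1)\le 0<u(x,h_2)$; (A2) for all $h\in\mathcal H$ the loss is non-negative, $-y\,\ell(h,x,y)$ is strictly monotonically increasing with $u(x,h)$, and there exists $v>0$ such that $u(x,h)=0$ implies $\ell(h,x,y)=v$; (A3) (realizability) there is $h\in\mathcal H$ with $\ell(h,x_i,y_i)=0$ for all $i=1,\dots,n$. Dynamics. Fix $q>1$ and a memory parameter $p\ge 0$. A state at time $t$ is $(H^t,A^t)$ with $H^t=(h^t_1,\dots,h^t_m)\in\mathcal H^m$ and usage matrix $A^t\in\mathbb R_+^{n\times m}$. Given classifiers $H$, a user best response is any $A\in\arg\max_{A\in\mathbb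 R_+^{n\times m}}\sum_{i=1}^n\big[\sum_{j=1}^m A_{ij}u(x_i,h_j)-\frac1q(\sum_{j=1}^m A_{ij})^q\big]$ (any tie-breaking). Memory: $M^{-1}=0$ and $M^t=\frac{A^t}{1+p}+\frac{pM^{t-1}}{1+p}$ for $t\ge0$. For a memory matrix $M^t$ define $L^t(H)=\sum_{j=1}^m\sum_{i=1}^n\frac{M^t_{ij}}{\sum_{k=1}^n M^t_{kj}}\ell(h_j,x_i,y_i)$, with the fraction taken to be $0$ when $\sum_k M^t_{kj}=0$. The service update is sticky: $H^{t+1}\in\arg\min_{H\in\mathcal H^m}L^t(H)$, and whenever $L^{t-1}(H^t)=L^t(H^t)$ we have $H^{t+1}=H^t$. (A4) $H^0\in\mathcal H^m$ is arbitrary; for every $t\ge0$, $A^t$ is a user best response to $H^t$, and $H^{t+1}$ is obtained from $M^t$ by the sticky service update. *)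

From HB Require Import structures.
From mathcomp Require Import all_boot all_order all_algebra.
From mathcomp Require Import all_classical all_reals all_analysis.
Set Implicit Arguments. Unset Strict Implicit. Unset Printing Implicit Defensive.
Import Order.TTheory GRing.Theory Num.Theory.
Local Open Scope ring_scope.

Section Defs.
Variables (R : realType) (X Hc : Type).

(* labels: true = +1, false = -1 *)
Definition sgnl (b : bool) : R := if b then 1 else -1.

Definition A1 (cl : Hc -> X -> bool) (u : X -> Hc -> R) : Prop :=
  forall (h1 h2 : Hc) (x : X), cl h1 x = false -> cl h2 x = true ->
    u x h1 <= 0 /\ 0 < u x h2.

Definition A2 (u : X -> Hc -> R) (loss : Hc -> X -> bool -> R) : Prop :=
  (forall h x y, 0 <= loss h x y) /\
  (exists phi : X -> bool -> R -> R,
      (forall x y a b, a < b -> phi x y a < phi x y b) /\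
      (forall h x y, - sgnl y * loss h x y = phi x y (u x h))) /\
  (exists v : R, 0 < v /\ forall h x y, u x h = 0 -> loss h x y = v).

Definition A3 (n : nat) (xs : 'I_n -> X) (ys : 'I_n -> bool)
  (loss : Hc -> X -> bool -> R) : Prop :=
  exists h : Hc, forall i, loss h (xs i) (ys i) = 0.

Definition user_obj (n m : nat) (q : R) (u : X -> Hc -> R) (xs : 'I_n -> X)
  (H : 'I_m -> Hc) (A : 'I_n -> 'I_m -> R) : R :=
  \sum_(i < n) (\sum_(j < m) A i j * u (xs i) (H j)
                 - (\sum_(j < m) A i j) `^ q / q).

Definition best_response (n m : nat) (q : R) (u : X -> Hc -> R)
  (xs : 'I_n -> X) (H : 'I_m -> Hc) (A : 'I_n -> 'I_m -> R) : Prop :=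
  (forall i j, 0 <= A i j) /\
  forall A' : 'I_n -> 'I_m -> R, (forall i j, 0 <= A' i j) ->
    user_obj q u xs H A' <= user_obj q u xs H A.

(* Mprev p A t = M^{t-1};  Mprev p A 0 = M^{-1} = 0,
   Mprev p A (t+1) = M^t = A^t/(1+p) + p M^{t-1}/(1+p). *)
Fixpoint Mprev (n m : nat) (p : R) (A : nat -> 'I_n -> 'I_m -> R) (t : nat)
  : 'I_n -> 'I_m -> R :=
  match t with
  | 0 => fun _ _ => 0
  | t'.+1 => fun i j => A t' i j / (1 + p) + p * Mprev p A t' i j / (1 + p)
  end.

Definition Lserv (n m : nat) (loss : Hc -> X -> bool -> R) (xs : 'I_n -> X)
  (ys : 'I_n -> bool) (M : 'I_n -> 'I_m -> R) (H : 'I_m -> Hc) : R :=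
  \sum_(j < m) \sum_(i < n)
    (if \sum_(k < n) M k j == 0 then 0 else M i j / \sum_(k < n) M k j)
      * loss (H j) (xs i) (ys i).

End Defs.

(* Realizability makes the minimum of every service loss L^t equal to 0, and
   L^t is a sum of nonnegative terms, so a minimizer incurs zero loss on every
   user with positive memory weight.  For p > 0 that weight never decays back
   to 0 once a user has visited a service, which gives the persistence part. *)
From HB Require Import structures.
From mathcomp Require Import all_boot all_order all_algebra.
From mathcomp Require Import all_classical all_reals all_analysis.
Set Implicit Arguments. Unset Strict Implicit. Unset Printing Implicit Defensive.
Import Order.TTheory GRing.Theory Num.Theory.
Local Open Scope ring_scope.

Section Memory.
Variables (R : realType) (n m : nat) (p : R) (A : nat -> 'I_n -> 'I_m -> R).
Hypotheses (p_ge0 : 0 <= p) (A_ge0 : forall t i j, 0 <= A t i j).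

Let onep_gt0 : 0 < 1 + p. Proof. by rewrite ltr_pwDl. Qed.

Lemma Mprev_ge0 t i j : 0 <= Mprev p A t i j.
Proof.
elim: t => [|t IH] //=.
by rewrite addr_ge0 // divr_ge0 ?mulr_ge0 ?A_ge0 // ltW.
Qed.

Lemma Mprev_gt0_usage t i j : 0 < A t i j -> 0 < Mprev p A t.+1 i j.
Proof.
move=> Atij /=; apply: ltr_wpDr; last by rewrite divr_gt0.
by rewrite divr_ge0 ?mulr_ge0 ?Mprev_ge0 // ltW.
Qed.

Lemma Mprev_gt0_memory t i j :
  0 < p -> 0 < Mprev p A t i j -> 0 < Mprev p A t.+1 i j.
Proof.
move=> p_gt0 Mtij /=; apply: ltr_wpDl; first by rewrite divr_ge0 ?A_ge0 // ltW.
by rewrite divr_gt0 // mulr_gt0.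
Qed.

Lemma Mprev_gt0_after t s i j :
  0 < p -> 0 < A t i j -> (t <= s)%N -> 0 < Mprev p A s.+1 i j.
Proof.
move=> p_gt0 Atij; elim: s => [|s IH].
  by rewrite leqn0 => /eqP <-; exact: Mprev_gt0_usage.
rewrite leq_eqVlt => /orP [/eqP <-|/IH]; first exact: Mprev_gt0_usage.
exact: Mprev_gt0_memory.
Qed.

End Memory.

Section ServiceLoss.
Variables (R : realType) (X Hc : Type) (n m : nat).
Variables (loss : Hc -> X -> bool -> R) (xs : 'I_n -> X) (ys : 'I_n -> bool).
Hypothesis loss_ge0 : forall h x y, 0 <= loss h x y.

Definition memory_weight (M : 'I_n -> 'I_m -> R) i j : R :=
  if \sum_(k < n) M k j == 0 then 0 else M i j / \sum_(k < n) M k j.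

Lemma LservE M H : Lserv loss xs ys M H =
  \sum_(j < m) \sum_(i < n) memory_weight M i j * loss (H j) (xs i) (ys i).
Proof. by []. Qed.

Variable M : 'I_n -> 'I_m -> R.
Hypothesis M_ge0 : forall i j, 0 <= M i j.

Lemma memory_weight_ge0 i j : 0 <= memory_weight M i j.
Proof.
rewrite /memory_weight; case: ifP => // _.
by rewrite divr_ge0 ?sumr_ge0.
Qed.

Lemma memory_weight_gt0 i j : 0 < M i j -> 0 < memory_weight M i j.
Proof.
move=> Mij; have colj_gt0 : 0 < \sum_(k < n) M k j.
  by rewrite (bigD1 i) //= ltr_pwDl ?sumr_ge0.
by rewrite /memory_weight gt_eqF // divr_gt0.
Qed.

Lemma Lserv_ge0 H : 0 <= Lserv loss xs ys M H.
Proof.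
by rewrite LservE !sumr_ge0 // => j _; rewrite sumr_ge0 // => i _;
  rewrite mulr_ge0 ?memory_weight_ge0.
Qed.

Lemma Lserv_const_eq0 h :
  (forall i, loss h (xs i) (ys i) = 0) -> Lserv loss xs ys M (fun=> h) = 0.
Proof.
by move=> h_zero; rewrite LservE big1 // => j _; rewrite big1 // => i _;
  rewrite h_zero mulr0.
Qed.

Lemma Lserv_eq0_loss H i j :
  Lserv loss xs ys M H = 0 -> 0 < M i j -> loss (H j) (xs i) (ys i) = 0.
Proof.
have term_ge0 j' i' : 0 <= memory_weight M i' j' * loss (H j') (xs i') (ys i').
  by rewrite mulr_ge0 ?memory_weight_ge0.
have col_ge0 : forall j', true ->
    0 <= \sum_(i' < n) memory_weight M i' j' * loss (H j') (xs i') (ys i').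
  by move=> j' _; rewrite sumr_ge0.
rewrite LservE => /(psumr_eq0P col_ge0)/(_ j isT).
move=> /(psumr_eq0P (fun i' _ => term_ge0 j i'))/(_ i isT)/eqP + Mij.
by rewrite mulf_eq0 gt_eqF ?memory_weight_gt0 // => /eqP.
Qed.

Lemma Lserv_min_loss H i j :
  (exists h, forall i, loss h (xs i) (ys i) = 0) ->
  (forall H', Lserv loss xs ys M H <= Lserv loss xs ys M H') ->
  0 < M i j -> loss (H j) (xs i) (ys i) = 0.
Proof.
move=> [h h_zero] H_min; apply: Lserv_eq0_loss; apply/eqP.
by rewrite eq_le Lserv_ge0 andbT -(Lserv_const_eq0 h_zero) H_min.
Qed.

End ServiceLoss.

Theorem lemma1 (R : realType) (X Hc : Type) (cl : Hc -> X -> bool)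
  (n m : nat) (xs : 'I_n -> X) (ys : 'I_n -> bool)
  (u : X -> Hc -> R) (loss : Hc -> X -> bool -> R) (q p : R)
  (Hs : nat -> 'I_m -> Hc) (A : nat -> 'I_n -> 'I_m -> R) :
  (0 < n)%N -> (0 < m)%N -> 1 < q -> 0 <= p ->
  A1 cl u -> A2 u loss -> A3 xs ys loss ->
  (* (A4) *)
  (forall t, best_response q u xs (Hs t) (A t)) ->
  (forall t (H : 'I_m -> Hc),
     Lserv loss xs ys (Mprev p A t.+1) (Hs t.+1)
       <= Lserv loss xs ys (Mprev p A t.+1) H) ->
  (forall t, Lserv loss xs ys (Mprev p A t) (Hs t)
             = Lserv loss xs ys (Mprev p A t.+1) (Hs t) ->
             forall j, Hs t.+1 j = Hs t j) ->
  (forall t i j, 0 < Mprev p A t.+1 i j -> loss (Hs t.+1 j) (xs i) (ys i) = 0) /\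
  (0 < p -> forall t i j, 0 < A t i j ->
     forall tau, (t < tau)%N -> loss (Hs tau j) (xs i) (ys i) = 0).
Proof.
move=> _ _ _ p_ge0 _ [loss_ge0 _] realizable br Hs_min _.
have A_ge0 t i j : 0 <= A t i j by case: (br t).
have zero_loss t i j :
    0 < Mprev p A t.+1 i j -> loss (Hs t.+1 j) (xs i) (ys i) = 0.
  move=> Mtij; exact (Lserv_min_loss loss_ge0 (Mprev_ge0 p_ge0 A_ge0 t.+1)
    realizable (Hs_min t) Mtij).
split=> // p_gt0 t i j Atij [//|s] t_le_s.
apply: zero_loss; exact (Mprev_gt0_after p_ge0 A_ge0 p_gt0 Atij t_le_s).
Qed.
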